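(* Let $m$ be a positive integer and $\sigma$ a composition of $m$. The maps $\Phi_\sigma:\Delta(\mathcal{T},m)\to\Gamma(\mathsf{hypo},\sigma)$, $Q\mapsto\pi_\sigma(Q)$, and $\Gamma(\mathsf{hypo},\sigma)\to\Delta(\mathcal{T},m)$, $T\mapsto\overline{T}$, are mutually inverse isomorphisms of unlabelled directed graphs.
   Context: Entries are positive integers. A quasi-array of size $m$ is an array $Q$ with cells $(i,j)$, $1\le i\le m$, $1\le j\le m-i+1$, each containing a positive integer $Q_{(i,j)}$, with $Q_{(1,j)}\le Q_{(1,j+1)}$ and $Q_{(i,j)}=Q_{(1,i+j-1)}+i-1$. The $k$-th diagonal is the set of cells with $i+j-1=k$. For $Q$ of size $m$: $D_m$ is always defined and adds $1$ to every entry of the $m$-th diagonal; for $1\le k\le m-1$, $D_k$ is defined iff $Q_{(1,k)}<Q_{(1,k+1)}$, and then adds $1$ to all entries of the $k$-th diagonal; $D_k$ is undefined for $k>m$. $\Delta(\mathcal{T},m)$ is the directed graph whose vertices are the quasi-arrays of size $m$, with an edge $Q\to D_k(Q)$ labelled $k$ whenever $D_k$ is defined on $Q$. A quasi-ribbon tableau of shape $\sigma=(\sigma_1,\dots,\sigma_r)$ is a filling with positive integers of the diagram having $\sigma_i$ cells in row $i$, the leftmost cell of row $i+1$ directly below the rightmost cell of row $i$, weakly increasing along rows and strictly increasing down columns. Its column reading is the word read column by column left to right, each column bottom to top. Quasi-Kashiwara operators on words: if $u$ contains a subsequence $(i+1)\,i$, $f_i(u)$ is undefined; otherwise $f_i(u)$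 replaces the rightmost $i$ by $i+1$ (undefined if no $i$ occurs). $\Gamma(\mathsf{hypo},\sigma)$ is the directed graph whose vertices are the quasi-ribbon tableaux of shape $\sigma$ (identified with their column readings), with an edge $u\to f_i(u)$ labelled $i$ whenever $f_i(u)$ is defined ($i\ge1$); it is a connected component of the graph on all words. $\pi_\sigma(Q)$ is the quasi-ribbon tableau formed by the cells of $Q$ making up a quasi-ribbon diagram of shape $\sigma$ whose first cell is $(1,1)$, with their entries from $Q$. For a quasi-ribbon tableau $T$ of shape $\sigma$ with $m$ cells, $\overline{T}$ is the unique quasi-array of size $m$ with $\pi_\sigma(\overline{T})=T$ (obtained by placing $T$ with its top-left cell at $(1,1)$ and filling each diagonal as a sequence of consecutive integers increasing downward). *)

(* All indices below are 0-based. *)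
From mathcomp Require Import all_boot.
Set Implicit Arguments. Unset Strict Implicit. Unset Printing Implicit Defensive.

(* A quasi-array is stored as its list of rows; row i (0-based) has m - i
   cells.  Paper cell (i,j) (1-based) is qentry Q (i-1) (j-1). *)
Definition qentry (Q : seq (seq nat)) (i j : nat) : nat := nth 0 (nth [::] Q i) j.

Definition is_qarray (m : nat) (Q : seq (seq nat)) : Prop :=
  [/\ size Q = m,
      (forall i, i < m -> size (nth [::] Q i) = m - i),
      (forall i j, i < m -> j < m - i -> 0 < qentry Q i j),
      (forall j, j.+1 < m -> qentry Q 0 j <= qentry Q 0 j.+1) &
      (forall i j, i < m -> j < m - i -> qentry Q i j = qentry Q 0 (i + j) + i)].

(* D_k (k 1-based, as in the paper): adds 1 to every entry of the k-th
   diagonal, i.e. the cells (i,j) (0-based) with i + j + 1 = k. *)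
Definition Dop (k : nat) (Q : seq (seq nat)) : option (seq (seq nat)) :=
  let m := size Q in
  if (0 < k <= m) && ((k == m) || (qentry Q 0 k.-1 < qentry Q 0 k))
  then Some (mkseq (fun i => mkseq (fun j =>
          qentry Q i j + (if (i + j).+1 == k then 1 else 0))
          (size (nth [::] Q i))) m)
  else None.

Definition Delta_edge (Q Q' : seq (seq nat)) : Prop :=
  exists k, Dop k Q = Some Q'.

Definition is_composition (m : nat) (sigma : seq nat) : Prop :=
  sumn sigma = m /\ all (fun p => 0 < p) sigma.

(* cells of the ribbon diagram are numbered t = 0,...,m-1 in row reading
   order; cell t lies in row rowof sigma t and column colof sigma t
   (0-based; leftmost cell of row r+1 is below rightmost cell of row r). *)
Definition rowof (sigma : seq nat) (t : nat) : nat :=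
  nth 0 (flatten [seq nseq (nth 0 sigma r) r | r <- iota 0 (size sigma)]) t.
Definition colof (sigma : seq nat) (t : nat) : nat := t - rowof sigma t.

Definition ent (T : seq (seq nat)) (t : nat) : nat := nth 0 (flatten T) t.

Definition is_qrt (sigma : seq nat) (T : seq (seq nat)) : Prop :=
  let m := sumn sigma in
  [/\ map size T = sigma,
      (forall t, t < m -> 0 < ent T t),
      (forall t t', t < t' < m -> rowof sigma t = rowof sigma t' -> ent T t <= ent T t') &
      (forall t t', t < t' < m -> colof sigma t = colof sigma t' -> ent T t < ent T t')].

Definition colread (sigma : seq nat) (T : seq (seq nat)) : seq nat :=
  let m := sumn sigma in
  flatten [seq [seq ent T t | t <- rev (iota 0 m) & colof sigma t == c]
          | c <- iota 0 m].

Definition fop (i : nat) (u : seq nat) : option (seq nat) :=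
  if subseq [:: i.+1; i] u then None
  else if i \in u then Some (set_nth 0 u (size u - (index i (rev u)).+1) i.+1)
  else None.

Definition Gamma_edge (sigma : seq nat) (T T' : seq (seq nat)) : Prop :=
  exists i, 0 < i /\ fop i (colread sigma T) = Some (colread sigma T').

(* pi_sigma(Q): the cells of Q forming the ribbon of shape sigma starting at
   (1,1): cell t of ribbon row r is the cell (r, t - r) (0-based) of Q. *)
Definition piQ (sigma : seq nat) (Q : seq (seq nat)) : seq (seq nat) :=
  [seq [seq qentry Q r (t - r) | t <- iota (sumn (take r sigma)) (nth 0 sigma r)]
  | r <- iota 0 (size sigma)].

(* T-bar: place T at (1,1), fill each diagonal with consecutive integers
   increasing downward; diagonal t contains cell t of T in row rowof t. *)
Definition qbar (sigma : seq nat) (T : seq (seq nat)) : seq (seq nat) :=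
  let m := sumn sigma in
  mkseq (fun i => mkseq (fun j =>
     ent T (i + j) - rowof sigma (i + j) + i) (m - i)) m.

(* A quasi-array is determined by its first row q, a positive weakly increasing
   sequence, and pi_sigma reads off the ribbon entries q t + row t, where row t is
   the ribbon row of cell t; conversely a quasi-ribbon tableau of shape sigma is
   exactly such a sequence shifted by the rows.  D_(t0+1) adds 1 to q t0 and is
   defined iff q ascends at t0 (or t0 is the last cell), while f_i adds 1 to the
   rightmost letter i of the column reading.  Cells with equal entries lie in one
   row, so that letter is the last cell t0 with entry i, and a factor (i+1) i of
   the reading can only come from t0 and the cell t0+1 just below it, when
   q (t0+1) = q t0.  Hence f_i is defined exactly when D_(t0+1) is, and both make
   the same change. *)

From mathcomp Require Import all_boot zify.
Set Implicit Arguments. Unset Strict Implicit. Unset Printing Implicit Defensive.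

Lemma leq_mono_on m (f : nat -> nat) :
  (forall t, t.+1 < m -> f t <= f t.+1) -> forall t t', t <= t' < m -> f t <= f t'.
Proof.
move=> f_step t t' /andP[le_tt' lt_t'm].
apply: (@homo_leq_in _ [pred t | t < m] f leq) => //=; first exact: leq_trans.
- by move=> x y _ ym k /andP[_ ky]; exact: ltn_trans ky ym.
- by move=> x _; exact: f_step.
- exact: leq_ltn_trans lt_t'm.
Qed.

Section Words.
Variables (T : eqType) (x0 : T).

Lemma subseq2P (u : seq T) a b : a != b ->
  subseq [:: a; b] u <->
  exists p q, [/\ p < q < size u, nth x0 u p = a & nth x0 u q = b].
Proof.
move=> neq_ab; rewrite (_ : subseq _ u = mem2 u a b); last first.
  by rewrite mem2E (negPf neq_ab).
split=> [mem2_ab | [p [q [/andP[lt_pq lt_qu] up uq]]]].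
  have a_u : a \in u by apply: mem2l mem2_ab.
  move: mem2_ab => /(nthP x0) [d]; rewrite size_drop nth_drop => lt_d ud.
  exists (index a u), (index a u + d); split; last by [].
  - case: d ud lt_d => [|d] ud lt_d; last by apply/andP; split; lia.
    by move: neq_ab; rewrite -ud addn0 nth_index ?eqxx.
  - exact: nth_index.
have le_au : index a u <= p.
  by rewrite leqNgt; apply/negP => /(before_find x0); rewrite /= up eqxx.
apply/(nthP x0); exists (q - index a u); first by rewrite size_drop; lia.
by rewrite nth_drop subnKC //; lia.
Qed.

Lemma last_occurrence (u : seq T) i : i \in u ->
  [/\ size u - (index i (rev u)).+1 < size u,
      nth x0 u (size u - (index i (rev u)).+1) = i &
      forall q, size u - (index i (rev u)).+1 < q < size u -> nth x0 u q != i].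
Proof.
move=> i_u; have lt_iu : index i (rev u) < size u by rewrite -size_rev index_mem mem_rev.
split; first lia.
  by rewrite -nth_rev // nth_index // mem_rev.
move=> q /andP[lt_pq lt_qu].
have lt_rq : size u - q.+1 < index i (rev u) by lia.
have := before_find x0 lt_rq; rewrite /= nth_rev; last lia.
by rewrite (_ : size u - (size u - q.+1).+1 = q) ?subnSK //; [move/negbT | lia].
Qed.

End Words.

Section MapWords.
Variables (T : eqType) (L : seq T).
Hypothesis L_uniq : uniq L.

Lemma set_nth_map x0 (e : T -> nat) p y : p < size L ->
  set_nth 0 (map e L) p y = map (fun t => if t == nth x0 L p then y else e t) L.
Proof.
move=> lt_pL; apply: (@eq_from_nth _ 0); first by rewrite size_set_nth !size_map; lia.
move=> n; rewrite size_set_nth size_map => lt_nL.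
have {}lt_nL : n < size L by lia.
by rewrite nth_set_nth /= !(nth_map x0) // nth_uniq // eq_sym; case: eqP.
Qed.

Lemma subseq2_mapP (e : T -> nat) a b : a != b ->
  subseq [:: a; b] (map e L) <->
  exists t t', [/\ t \in L, t' \in L, index t L < index t' L, e t = a & e t' = b].
Proof.
move=> neq_ab; rewrite (subseq2P 0 _ neq_ab) size_map; split.
  move=> [p [q [/andP[lt_pq lt_qL] ep eq]]].
  case: L L_uniq lt_qL ep eq => [//|x0 s] uniq_s lt_qL ep eq.
  exists (nth x0 (x0 :: s) p), (nth x0 (x0 :: s) q).
  rewrite !index_uniq ?mem_nth //; try lia.
  by rewrite -ep -eq !(nth_map x0) //; lia.
move=> [t [t' [tL t'L lt_idx et et']]].
exists (index t L), (index t' L); rewrite lt_idx index_mem t'L.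
by rewrite !(nth_map t) ?index_mem ?nth_index.
Qed.

Lemma fop_mapP (e e' : T -> nat) i :
  fop i (map e L) = Some (map e' L) <->
  ~~ subseq [:: i.+1; i] (map e L) /\
  exists t0, [/\ t0 \in L, e t0 = i,
    (forall t, t \in L -> e t = i -> index t L <= index t0 L) &
    forall t, t \in L -> e' t = if t == t0 then i.+1 else e t].
Proof.
rewrite /fop; case: ifP => [_|no_inv]; first by split=> // -[].
case: ifP => [i_eL|i_notin]; last first.
  split=> // -[_ [t0 [t0L et0 _ _]]].
  by move: i_notin; rewrite -et0 map_f.
have [lt_pL ep p_last] := last_occurrence 0 i_eL.
move: lt_pL ep p_last; set p := _ - _; rewrite size_map => lt_pL ep p_last.
have x0 : T by case: L lt_pL.
have ith t : t \in L -> nth 0 (map e L) (index t L) = e t.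
  by move=> tL; rewrite (nth_map x0) ?index_mem // nth_index.
rewrite (set_nth_map x0) //; split=> [[/esym/eq_in_map e'E] | [_ [t0 [t0L et0 t0_last e'E]]]].
  split=> //; exists (nth x0 L p); split.
  - exact: mem_nth.
  - by rewrite -ep (nth_map x0).
  - move=> t tL et; rewrite index_uniq // leqNgt; apply/negP => lt_pt.
    by have := p_last (index t L); rewrite lt_pt index_mem tL ith // et eqxx => /(_ isT).
  - by move=> t tL; rewrite e'E.
have p_t0 : p = index t0 L.
  apply/eqP; rewrite eqn_leq; apply/andP; split.
    rewrite -{1}(index_uniq x0 lt_pL L_uniq).
    by apply: t0_last; rewrite ?mem_nth // -ep (nth_map x0).
  rewrite leqNgt; apply/negP => lt_pt0.
  by have := p_last (index t0 L); rewrite lt_pt0 index_mem t0L ith // et0 eqxx => /(_ isT).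
congr Some; apply/eq_in_map => t tL; rewrite e'E // p_t0 nth_index //.
Qed.

End MapWords.

Lemma index_lt_pairwise (T : eqType) (r : rel T) (s : seq T) x y :
  (forall x y, r x y -> ~~ r y x) -> pairwise r s -> x \in s -> y \in s ->
  (index x s < index y s) = r x y.
Proof.
move=> r_asym /(pairwiseP x) r_s xs ys; apply/idP/idP => [lt_xy | rxy].
  by have := r_s _ _ _ _ lt_xy; rewrite !nth_index ?inE ?index_mem //; apply.
rewrite ltnNge leq_eqVlt; apply/negP => /orP[/eqP eq_idx | lt_yx].
  have eq_yx : y = x by rewrite -(nth_index x ys) eq_idx nth_index.
  by rewrite eq_yx in rxy; move: (r_asym _ _ rxy); rewrite rxy.
have := r_s _ _ _ _ lt_yx; rewrite !nth_index ?inE ?index_mem // => /(_ ys xs) ryx.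
by move: (r_asym _ _ rxy); rewrite ryx.
Qed.

Definition read_before (row : nat -> nat) : rel nat := fun t t' =>
  (t - row t < t' - row t') || ((t - row t == t' - row t') && (t' < t)).

Lemma read_before_asym row t t' : read_before row t t' -> ~~ read_before row t' t.
Proof. by rewrite /read_before; lia. Qed.

(* With [q] the first row of a quasi-array, [ascent m q t] says that [D_(t+1)]
   is defined. *)
Definition ascent m (q : nat -> nat) t := (t.+1 == m) || (q t < q t.+1).

Section Reading.
Variables (m : nat) (row q q' : nat -> nat) (L : seq nat).
Hypothesis row_le : forall t, row t <= t.
Hypothesis row_step : forall t, t.+1 < m -> row t.+1 = row t \/ row t.+1 = (row t).+1.
Hypothesis q_pos : forall t, t < m -> 0 < q t.
Hypothesis q_mono : forall t, t.+1 < m -> q t <= q t.+1.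
Hypothesis L_mem : forall t, (t \in L) = (t < m).
Hypothesis L_read : pairwise (read_before row) L.

Lemma reading_mono t t' : t <= t' -> t' < m ->
  [/\ row t <= row t', t - row t <= t' - row t' & q t <= q t'].
Proof.
move=> le_tt' lt_t'm; have le : t <= t' < m by rewrite le_tt'.
split.
- by apply: (leq_mono_on (f := row) _ le) => s /row_step; lia.
- apply: (leq_mono_on (f := fun s => s - row s) _ le) => s /row_step.
  by have := row_le s; lia.
- exact: leq_mono_on q_mono _ _ le.
Qed.

Lemma ascent_rightmost_free t0 : t0 < m ->
  ascent m q t0 <->
  (forall t, t < m -> t != t0 -> q t + row t = q t0 + row t0 ->
     read_before row t t0) /\
  (forall t t', t < m -> t' < m -> read_before row t t' ->
     q t + row t = (q t0 + row t0).+1 -> q t' + row t' = q t0 + row t0 -> False).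
Proof.
rewrite /ascent /read_before => lt_t0m; split.
  move=> asc; have q_after t : t0 < t -> t < m -> q t0 < q t.
    move=> lt_t0t lt_tm; have [_ _ le_q] := reading_mono lt_t0t lt_tm.
    by case/orP: asc => [/eqP|]; lia.
  split.
    move=> t lt_tm ne_tt0 e_tt0.
    case: (ltngtP t t0) ne_tt0 => [lt_tt0|lt_t0t|->]; last by rewrite eqxx.
      by have [] := reading_mono (ltnW lt_tt0) lt_t0m; have := row_le t; lia.
    by have [] := reading_mono (ltnW lt_t0t) lt_tm; have := q_after t lt_t0t lt_tm; lia.
  move=> t t' lt_tm lt_t'm before et et'.
  have le_t't0 : t' <= t0.
    rewrite leqNgt; apply/negP => lt_t0t'.
    by have [] := reading_mono (ltnW lt_t0t') lt_t'm; have := q_after t' lt_t0t' lt_t'm; lia.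
  have lt_t0t : t0 < t.
    by rewrite ltnNge; apply/negP => le_tt0; have [] := reading_mono le_tt0 lt_t0m; lia.
  (* [q t0 < q t] forces [row t = row t0]: [t] lies right of [t'] and is read after it. *)
  have [] := reading_mono le_t't0 lt_t0m; have [] := reading_mono (ltnW lt_t0t) lt_tm.
  have := q_after t lt_t0t lt_tm; have := row_le t; have := row_le t'; lia.
move=> [last_t0 no_inv]; apply/orP; case: (ltnP t0.+1 m) => [lt_t1m | ]; last by left; lia.
right; rewrite ltnNge; apply/negP => le_q.
have := q_mono lt_t1m; case: (row_step lt_t1m) => row_t1 le_q'.
  have := last_t0 t0.+1 lt_t1m; rewrite row_t1; have := row_le t0; lia.
by apply: (no_inv t0.+1 t0) => //; rewrite row_t1; have := row_le t0; lia.
Qed.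

Lemma reading_edge :
  (exists t0, [/\ t0 < m, ascent m q t0 & forall t, t < m -> q' t = q t + (t == t0)]) <->
  (exists i, 0 < i /\
     fop i [seq q t + row t | t <- L] = Some [seq q' t + row t | t <- L]).
Proof.
have L_uniq : uniq L.
  by apply: pairwise_uniq L_read => t; rewrite /read_before; lia.
have idx t t' : t < m -> t' < m -> (index t L < index t' L) = read_before row t t'.
  by rewrite -!L_mem; apply: index_lt_pairwise => //; apply: read_before_asym.
have neq_succ n : n.+1 != n by rewrite gtn_eqF.
split=> [[t0 [lt_t0m asc q'E]] |
          [i [i_pos /(fop_mapP L_uniq) [no_inv [t0 [t0L et0 t0_last e'E]]]]]].
  have [last_t0 no_inv] := (ascent_rightmost_free lt_t0m).1 asc.
  exists (q t0 + row t0); split; first by rewrite addn_gt0 q_pos.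
  apply/(fop_mapP L_uniq); split.
    apply/negP => /(subseq2_mapP L_uniq _ (neq_succ _)) [t [t' [tL t'L lt_idx et et']]].
    move: tL t'L; rewrite !L_mem => tL t'L.
    by apply: (no_inv t t') => //; rewrite -idx.
  exists t0; split; rewrite ?L_mem //.
    move=> t; rewrite L_mem => lt_tm et; case: (eqVneq t t0) => [-> // | ne_tt0].
    by apply: ltnW; rewrite idx //; apply: last_t0.
  by move=> t; rewrite L_mem => lt_tm; rewrite q'E //; case: eqP => [-> | _]; lia.
rewrite L_mem in t0L; exists t0; split=> //; last first.
  by move=> t lt_tm; have := e'E t; rewrite L_mem => /(_ lt_tm); case: eqP => [-> | _]; lia.
apply/(ascent_rightmost_free t0L); split.
  move=> t lt_tm ne_tt0 et; rewrite -idx // ltn_neqAle t0_last ?L_mem ?et // andbT.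
  apply: contra ne_tt0 => /eqP eq_idx; apply/eqP.
  by move: eq_idx; apply: (index_inj 0); rewrite L_mem.
move=> t t' lt_tm lt_t'm before et et'; move/negP: no_inv; apply.
apply/(subseq2_mapP L_uniq _ (neq_succ _)); exists t, t'.
by rewrite !L_mem idx // -et0.
Qed.

End Reading.

Definition ribbon (sigma : seq nat) (g : nat -> nat -> nat) : seq (seq nat) :=
  [seq [seq g r t | t <- iota (sumn (take r sigma)) (nth 0 sigma r)]
  | r <- iota 0 (size sigma)].

Lemma ribbon_cons a sigma g : ribbon (a :: sigma) g =
  [seq g 0 t | t <- iota 0 a] :: ribbon sigma (fun r t => g r.+1 (a + t)).
Proof.
rewrite /ribbon /= (iotaDl 1 0) -map_comp; congr (_ :: _).
by apply: eq_map => r /=; rewrite iotaDl -map_comp.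
Qed.

Lemma shape_ribbon sigma g : shape (ribbon sigma g) = sigma.
Proof.
rewrite /shape /ribbon -map_comp -[RHS](mkseq_nth 0).
by apply: eq_map => r /=; rewrite size_map size_iota.
Qed.

Lemma size_row_labels sigma :
  size (flatten [seq nseq (nth 0 sigma r) r | r <- iota 0 (size sigma)]) = sumn sigma.
Proof.
rewrite size_flatten /shape -map_comp -[in RHS](mkseq_nth 0 sigma).
by congr sumn; apply: eq_map => r /=; rewrite size_nseq.
Qed.

Lemma rowof_cons a sigma t : t < a + sumn sigma ->
  rowof (a :: sigma) t = if t < a then 0 else (rowof sigma (t - a)).+1.
Proof.
move=> lt_t; rewrite /rowof /= (iotaDl 1 0) -map_comp.
rewrite (eq_map (g := map S \o (fun r => nseq (nth 0 sigma r) r))); last first.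
  by move=> r /=; rewrite map_nseq.
rewrite map_comp -map_flatten nth_cat size_nseq nth_nseq.
by case: ifP => // le_at; [case: ifP | rewrite (nth_map 0) // size_row_labels; lia].
Qed.

Lemma ent_ribbon sigma g t : t < sumn sigma ->
  ent (ribbon sigma g) t = g (rowof sigma t) t.
Proof.
rewrite /ent; elim: sigma g t => [//|a sigma IH] g t lt_t.
rewrite ribbon_cons /= nth_cat size_map size_iota rowof_cons //.
case: ifP => [lt_ta | le_at]; first by rewrite (nth_map 0) ?size_iota // nth_iota.
by rewrite IH; [congr g | ]; move: lt_t le_at => /=; lia.
Qed.

Lemma ribbon_ent sigma g T : shape T = sigma ->
  (forall t, t < sumn sigma -> g (rowof sigma t) t = ent T t) -> ribbon sigma g = T.
Proof.
move=> shT gT; apply: eq_from_flatten_shape; last by rewrite shape_ribbon.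
apply: (@eq_from_nth _ 0); first by rewrite !size_flatten shape_ribbon shT.
rewrite size_flatten shape_ribbon => t lt_t.
by change (ent (ribbon sigma g) t = ent T t); rewrite ent_ribbon // gT.
Qed.

Lemma rowof_le sigma t : all (fun p => 0 < p) sigma -> rowof sigma t <= t.
Proof.
elim: sigma t => [|a s IH] t /=; first by rewrite /rowof nth_nil.
move=> /andP[a_pos s_pos]; case: (ltnP t (a + sumn s)) => [lt_t | le_t].
  by rewrite rowof_cons //; case: ifP => // le_at; have := IH (t - a) s_pos; lia.
by rewrite /rowof nth_default // size_row_labels.
Qed.

Lemma rowof_step sigma t : all (fun p => 0 < p) sigma -> t.+1 < sumn sigma ->
  rowof sigma t.+1 = rowof sigma t \/ rowof sigma t.+1 = (rowof sigma t).+1.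
Proof.
elim: sigma t => [//|a s IH] t /= /andP[a_pos s_pos] lt_t.
rewrite !rowof_cons; try lia.
case: (ltnP t.+1 a) => [lt_t1a | le_at1]; first by left; rewrite ifT //; lia.
case: (ltnP t a) => [lt_ta | le_at].
  by right; rewrite (_ : t.+1 - a = 0); [have := rowof_le 0 s_pos; lia | lia].
by rewrite subSn //; case: (IH (t - a) s_pos) => [| ->| ->]; [lia | left | right].
Qed.

Definition qarray_of m (f : nat -> nat) : seq (seq nat) :=
  mkseq (fun i => mkseq (fun j => f (i + j) + i) (m - i)) m.

Lemma qentry_qarray_of m f i j : i < m -> j < m - i ->
  qentry (qarray_of m f) i j = f (i + j) + i.
Proof. by move=> lt_im lt_jm; rewrite /qentry !nth_mkseq. Qed.

Lemma qarray_ofE m Q : is_qarray m Q -> Q = qarray_of m (qentry Q 0).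
Proof.
move=> [size_Q size_row _ _ diag]; apply: (@eq_from_nth _ [::]); first by rewrite size_mkseq.
move=> i; rewrite size_Q => lt_im; rewrite nth_mkseq //.
apply: (@eq_from_nth _ 0); first by rewrite size_mkseq size_row.
by move=> j; rewrite size_row // => lt_jm; rewrite nth_mkseq // -diag.
Qed.

Lemma eq_qarray_of m f g :
  qarray_of m f = qarray_of m g <-> forall t, t < m -> f t = g t.
Proof.
split=> [fg t lt_tm | fg].
  have := congr1 (fun Q => qentry Q 0 t) fg.
  by rewrite /= !qentry_qarray_of ?subn0 ?add0n ?addn0 //; lia.
apply/eq_in_map => i; rewrite mem_iota => /andP[_ lt_im].
apply/eq_in_map => j; rewrite mem_iota => /andP[_ lt_jm].
by rewrite fg //; lia.
Qed.

Lemma qarray_of_qarray m f :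
  (forall t, t < m -> 0 < f t) -> (forall t, t.+1 < m -> f t <= f t.+1) ->
  is_qarray m (qarray_of m f).
Proof.
move=> f_pos f_mono; split.
- exact: size_mkseq.
- by move=> i lt_im; rewrite nth_mkseq ?size_mkseq.
- by move=> i j lt_im lt_jm; rewrite qentry_qarray_of // addn_gt0 f_pos //; lia.
- by move=> j lt_jm; rewrite !qentry_qarray_of ?subn0 ?add0n ?addn0; try lia; apply: f_mono.
- by move=> i j lt_im lt_jm; rewrite !qentry_qarray_of ?subn0 ?add0n ?addn0 //; lia.
Qed.

Lemma Dop_qarrayP m Q Q' k : is_qarray m Q -> is_qarray m Q' ->
  Dop k Q = Some Q' <->
  [/\ 0 < k <= m, (k == m) || (qentry Q 0 k.-1 < qentry Q 0 k) &
      forall t, t < m -> qentry Q' 0 t = qentry Q 0 t + (t.+1 == k)].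
Proof.
move=> qaQ qaQ'; have [size_Q size_row _ _ diag] := qaQ.
have -> : Dop k Q = if (0 < k <= m) && ((k == m) || (qentry Q 0 k.-1 < qentry Q 0 k))
    then Some (qarray_of m (fun t => qentry Q 0 t + (t.+1 == k))) else None.
  rewrite /Dop size_Q; case: ifP => // _; congr Some.
  apply/eq_in_map => i; rewrite mem_iota => /andP[_ lt_im]; rewrite size_row //.
  apply/eq_in_map => j; rewrite mem_iota => /andP[_ lt_jm].
  by rewrite diag; [rewrite addnAC | lia | lia].
rewrite [in Some Q'](qarray_ofE qaQ'); case: ifP => [/andP[k_range k_asc] | k_off].
  split=> [[/eq_qarray_of q'E] | [_ _ q'E]]; first by split=> // t /q'E.
  by congr Some; apply/eq_qarray_of => t /q'E.
by split=> // -[k_range k_asc _]; rewrite k_range k_asc in k_off.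
Qed.

Definition colcells (sigma : seq nat) : seq nat :=
  flatten [seq [seq t <- rev (iota 0 (sumn sigma)) | colof sigma t == c]
          | c <- iota 0 (sumn sigma)].

Lemma colreadE sigma T : colread sigma T = map (ent T) (colcells sigma).
Proof. by rewrite /colread /colcells map_flatten -map_comp. Qed.

Lemma mem_colcells sigma t : (t \in colcells sigma) = (t < sumn sigma).
Proof.
apply/flatten_mapP/idP => [[c _] | lt_t].
  by rewrite mem_filter mem_rev mem_iota => /andP[_ /andP[_ lt_t]].
exists (colof sigma t); first by rewrite mem_iota /colof; lia.
by rewrite mem_filter eqxx mem_rev mem_iota.
Qed.

Lemma colcells_read_before sigma : pairwise (read_before (rowof sigma)) (colcells sigma).
Proof.
rewrite /colcells; set n := sumn sigma.
have rev_iota : pairwise (fun t t' => t' < t) (rev (iota 0 n)).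
  rewrite -sorted_pairwise; last by move=> a b c; lia.
  by rewrite rev_sorted; apply: iota_ltn_sorted.
suff pw_cols k c : pairwise (read_before (rowof sigma))
    (flatten [seq [seq t <- rev (iota 0 n) | colof sigma t == c'] | c' <- iota c k]).
  exact: pw_cols.
elim: k c => [//|k IH] c /=.
rewrite pairwise_cat IH andbT; apply/andP; split.
  apply/allrelP => t t'; rewrite mem_filter => /andP[/eqP col_t _].
  move=> /flatten_mapP[c']; rewrite mem_iota mem_filter => c_c' /andP[/eqP col_t' _].
  by move: col_t col_t'; rewrite /read_before /colof; lia.
apply: (@sub_in_pairwise _ (fun t => colof sigma t == c) (fun t t' => t' < t)).
- by move=> t t' /eqP + /eqP; rewrite /read_before /colof; lia.
- by apply/allP => t; rewrite mem_filter => /andP[].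
- exact: pairwise_filter.
Qed.

Section Composition.
Variable sigma : seq nat.
Hypothesis sigma_pos : all (fun p => 0 < p) sigma.

Local Notation m := (sumn sigma).
Local Notation row := (rowof sigma).

Let row_le t : row t <= t := rowof_le t sigma_pos.
Let row_step t : t.+1 < m -> row t.+1 = row t \/ row t.+1 = (row t).+1 :=
  rowof_step sigma_pos.

Lemma ent_piQ Q t : is_qarray m Q -> t < m ->
  ent (piQ sigma Q) t = qentry Q 0 t + row t.
Proof.
move=> [_ _ _ _ diag] lt_tm.
rewrite [piQ _ _](_ : _ = ribbon sigma (fun r t => qentry Q r (t - r))) //.
by rewrite ent_ribbon // diag ?subnKC //; have := row_le t; lia.
Qed.

Lemma is_qrtP T : is_qrt sigma T <->
  [/\ shape T = sigma, forall t, t < m -> row t < ent T t &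
      forall t, t.+1 < m -> ent T t - row t <= ent T t.+1 - row t.+1].
Proof.
split=> [[shT ent_pos rowwise colwise] | [shT row_lt mono]].
  have step t : t.+1 < m -> (row t.+1 = row t /\ ent T t <= ent T t.+1) \/
                            (row t.+1 = (row t).+1 /\ ent T t < ent T t.+1).
    move=> lt_t1m; have := row_le t.
    case: (row_step lt_t1m) => row_t1 le_rt; [left | right]; split=> //.
      by apply: rowwise; rewrite ?row_t1 //; lia.
    by apply: colwise; rewrite /colof ?row_t1; lia.
  suff lt_row t : t < m -> row t < ent T t.
    by split=> // t lt_t1m; have := step t lt_t1m; have := lt_row t (ltnW lt_t1m); lia.
  elim: t => [lt_0m | t IH lt_t1m]; first by have := row_le 0; have := ent_pos 0 lt_0m; lia.
  by have := IH (ltnW lt_t1m); have := step t lt_t1m; lia.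
have mono_le t t' : t <= t' < m -> ent T t - row t <= ent T t' - row t'.
  exact: leq_mono_on (fun s => ent T s - row s) mono t t'.
split=> //.
- by move=> t lt_tm; have := row_lt t lt_tm; lia.
- move=> t t' /andP[lt_tt' lt_t'm] eq_row; have := mono_le t t'.
  have := row_lt t; have := row_lt t'; rewrite eq_row; lia.
- move=> t t' /andP[lt_tt' lt_t'm]; rewrite /colof => eq_col.
  have := mono_le t t'; have := row_lt t; have := row_lt t'.
  have := row_le t; have := row_le t'; lia.
Qed.

Lemma piQ_qrt Q : is_qarray m Q -> is_qrt sigma (piQ sigma Q).
Proof.
move=> qaQ; have [_ _ Q_pos Q_mono _] := qaQ; apply/is_qrtP; split.
- exact: shape_ribbon.
- by move=> t lt_tm; rewrite ent_piQ //; have := Q_pos 0 t; rewrite subn0; lia.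
- by move=> t lt_t1m; rewrite !ent_piQ ?addnK ?Q_mono //; lia.
Qed.

Lemma qbarE T : qbar sigma T = qarray_of m (fun t => ent T t - row t).
Proof. by []. Qed.

Lemma qbar_qarray T : is_qrt sigma T -> is_qarray m (qbar sigma T).
Proof.
move=> /is_qrtP[_ row_lt mono]; rewrite qbarE.
by apply: qarray_of_qarray => // t /row_lt; lia.
Qed.

Lemma qbar_piQ Q : is_qarray m Q -> qbar sigma (piQ sigma Q) = Q.
Proof.
move=> qaQ; rewrite qbarE [RHS](qarray_ofE qaQ); apply/eq_qarray_of => t lt_tm.
by rewrite ent_piQ // addnK.
Qed.

Lemma piQ_qbar T : is_qrt sigma T -> piQ sigma (qbar sigma T) = T.
Proof.
move=> /is_qrtP[shT row_lt _]; apply: ribbon_ent => // t lt_tm.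
have le_rt := row_le t; have lt_rt := row_lt t lt_tm.
by rewrite qbarE qentry_qarray_of /= ?subnKC //; lia.
Qed.

Lemma colread_piQ Q : is_qarray m Q ->
  colread sigma (piQ sigma Q) = [seq qentry Q 0 t + row t | t <- colcells sigma].
Proof.
by move=> qaQ; rewrite colreadE; apply/eq_in_map => t; rewrite mem_colcells => /ent_piQ->.
Qed.

Lemma Delta_Gamma_edge Q Q' : is_qarray m Q -> is_qarray m Q' ->
  Delta_edge Q Q' <-> Gamma_edge sigma (piQ sigma Q) (piQ sigma Q').
Proof.
move=> qaQ qaQ'; have [_ _ Q_pos Q_mono _] := qaQ.
have q_pos t : t < m -> 0 < qentry Q 0 t by move=> lt_tm; apply: Q_pos; lia.
rewrite /Gamma_edge !colread_piQ // -(reading_edge (qentry Q' 0) row_le row_step q_pos Q_mono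
  (mem_colcells sigma) (colcells_read_before sigma)).
split=> [[k /(Dop_qarrayP k qaQ qaQ') [/andP[k_pos k_le] asc q'E]] | [t0 [lt_t0m asc q'E]]].
  exists k.-1; rewrite /ascent prednK //; split=> // t /q'E ->.
  by rewrite -[t == k.-1]eqSS prednK.
by exists t0.+1; apply/(Dop_qarrayP _ qaQ qaQ'); split=> // t /q'E ->.
Qed.

End Composition.

Theorem theorem4p1 (m : nat) (sigma : seq nat) :
  0 < m -> is_composition m sigma ->
  [/\ (forall Q, is_qarray m Q -> is_qrt sigma (piQ sigma Q)),
      (forall T, is_qrt sigma T -> is_qarray m (qbar sigma T)),
      (forall Q, is_qarray m Q -> qbar sigma (piQ sigma Q) = Q),
      (forall T, is_qrt sigma T -> piQ sigma (qbar sigma T) = T) &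
      (forall Q Q', is_qarray m Q -> is_qarray m Q' ->
         (Delta_edge Q Q' <-> Gamma_edge sigma (piQ sigma Q) (piQ sigma Q')))].
Proof.
move=> _ [<- sigma_pos]; split.
- exact: piQ_qrt.
- exact: qbar_qarray.
- exact: qbar_piQ.
- exact: piQ_qbar.
- exact: Delta_Gamma_edge.
Qed.
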